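(* Let $h$ be an admissible perturbation. There exist constants $\overline C_e<C_e$, $e\in\mathcal E$, depending only on $h$ and the network (not on $\eta$), such that for every $\eta>0$ there is $t_0\ge0$ with the following property: for every admissible initial condition, the solution of the dynamics with rate $\eta$ satisfies $f^\pi_e(t)=(A\pi(t))_e\le\overline C_e$ for all $t\ge t_0$ and all $e\in\mathcal E$.
   Context: Network: $\mathcal G=(\mathcal V,\mathcal E)$ is a finite directed graph with $\mathcal V=\{0,1,\dots,n\}$, containing no directed cycle, in which node $0$ is the unique node with no incoming link, node $n$ is the unique node with no outgoing link, there is a directed path from every node to $n$, and every link $(u,v)\in\mathcal E$ satisfies $u<v$. For $v\in\mathcal V$, $\mathcal E_v^-$ and $\mathcal E_v^+$ are the sets of links entering and leaving $v$. Each link $e$ has a flow-density function $\mu_e:[0,\infty)\to[0,\infty)$ that is continuously differentiable, strictly increasing, strictly concave, with $\mu_e(0)=0$ and $\mu_e'(0)<\infty$; its capacity is $C_e:=\lim_{\rho\to\infty}\mu_e(\rho)\in(0,+\infty]$. Put $\mathcal F_v:=\prod_{e\in\mathcal E_v^+}[0,C_e)$, $\mathcal F:=\prod_{e\in\mathcal E}[0,C_e)$, and $\mu(\rho):=(\mu_e(\rho_e))_{e\in\mathcal E}$. The delay is $T_e(f_e)=\mu_e^{-1}(f_e)/f_e$ for $0<f_e<C_e$, $T_e(0)=1/\mu_e'(0)$, $T_e(f_e)=+\infty$ for $f_e\ge C_e$; $T(f):=(T_e(f_e))_e$. $\mathcal P$ is the set of directed paths from $0$ to $n$, $A\in\{0,1\}^{\mathcal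 E\times\mathcal P}$ the link-path incidence matrix ($A_{ep}=1$ iff $e\in p$), $\mathcal S(\mathcal P)=\{\pi\in\mathbb R_+^{\mathcal P}:\sum_p\pi_p=1\}$, $\Pi:=\{\pi\in\mathcal S(\mathcal P):(A\pi)_e<C_e\ \forall e\}$, and $f^\pi:=A\pi$. The min-cut capacity $C^*:=\min\{\sum_{(u,v)\in\mathcal E:u\in\mathcal U,v\notin\mathcal U}C_{(u,v)}:\mathcal U\subseteq\mathcal V,0\in\mathcal U,n\notin\mathcal U\}$ is assumed to satisfy $C^*>1$. Perturbation: $\Phi:=I-|\mathcal P|^{-1}\mathbf 1\mathbf 1'$; interiors $\mathrm{int}$ and boundaries $\partial$ of subsets of $\mathcal S(\mathcal P)$ are relative to the hyperplane $\{x:\mathbf 1'x=1\}$. An admissible perturbation is a function $h:\Pi_h\to\mathbb R$, where $\Pi_h\subseteq\Pi$ is closed in $\mathbb R^{\mathcal P}$, convex, with nonempty interior, $h$ is strictly convex, twice differentiable on $\mathrm{int}(\Pi_h)$, and $\|\tilde\nabla h(\pi)\|\to+\infty$ as $\pi\to\partial\Pi_h$, where $\tilde\nabla h:=\Phi\nabla h$. Its perturbed best response is $F^h(f):=\arg\min_{\omega\in\Pi_h}\{\omega'A'T(f)+h(\omega)\}$ for $f\in\mathcal F$. Local decisions: for each $v\in\{0,\dots,n-1\}$ a continuously differentiable $G^v:\mathcal F_v\times\Pi\to\mathcal S(\mathcal E_v^+)$ is given such that (consistency) $(\sum_{j\in\mathcal E_v^+}f^\pi_j)\,G^v_e(f^\pi_{\mathcal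 E_v^+},\pi)=f^\pi_e$ for all $\pi\in\Pi$, $e\in\mathcal E_v^+$; and (cooperativity) $\partial G^v_j(f_{\mathcal E_v^+},\pi)/\partial f_e\ge0$ for all $\pi\in\Pi$, $f_{\mathcal E_v^+}\in\mathcal F_v$, $j\neq e\in\mathcal E_v^+$. For $f\in\mathcal F$, $\pi\in\Pi$, $e\in\mathcal E_v^+$: $H_e(f,\pi):=G^v_e(f_{\mathcal E_v^+},\pi)-f_e$ if $v=0$, and $H_e(f,\pi):=(\sum_{j\in\mathcal E_v^-}f_j)G^v_e(f_{\mathcal E_v^+},\pi)-f_e$ if $1\le v<n$. Dynamics: for $\eta>0$, $\dot\pi=\eta(F^h(f)-\pi)$, $\dot\rho=H(f,\pi)$, $f=\mu(\rho)$. An admissible initial condition is $\pi(0)\in\Pi$ with all entries positive and $\rho(0)\in(0,\infty)^{\mathcal E}$; $(\pi(t),\rho(t))_{t\ge0}$ denotes the (unique, global) solution, $f(t):=\mu(\rho(t))$, $f^\pi(t):=A\pi(t)$. *)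

(* Vectors indexed by links / paths
   are functions edge -> R / path -> R; only their values on the links of E /
   the paths of Ps are meaningful. *)
From Stdlib Require Import Reals List Bool.
Import ListNotations.
Open Scope R_scope.

Definition edge := (nat * nat)%type.
Definition path := list edge.

Fixpoint sumL {A : Type} (l : list A) (f : A -> R) : R :=
  match l with [] => 0 | a :: l' => f a + sumL l' f end.

Definition edge_eqb (e e' : edge) : bool :=
  Nat.eqb (fst e) (fst e') && Nat.eqb (snd e) (snd e').
Definition memb (e : edge) (p : path) : bool := existsb (edge_eqb e) p.

Fixpoint is_path (E : list edge) (u w : nat) (p : path) : Prop :=
  match p with
  | [] => u = w
  | e :: p' => In e E /\ fst e = u /\ is_path E (snd e) w p'
  end.

Definition Eout (E : list edge) (v : nat) : list edge :=
  filter (fun e => Nat.eqb (fst e) v) E.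
Definition Ein (E : list edge) (v : nat) : list edge :=
  filter (fun e => Nat.eqb (snd e) v) E.

(* the standing assumptions on the graph G = ({0..n}, E);
   acyclicity follows from u < v for every link (u,v) *)
Definition network (n : nat) (E : list edge) : Prop :=
  NoDup E /\
  (forall e, In e E -> (fst e < snd e)%nat /\ (snd e <= n)%nat) /\
  (forall e, In e E -> snd e <> 0%nat) /\
  (forall v, (1 <= v <= n)%nat -> exists e, In e E /\ snd e = v) /\
  (forall e, In e E -> fst e <> n) /\
  (forall v, (v < n)%nat -> exists e, In e E /\ fst e = v) /\
  (forall v, (v <= n)%nat -> exists p, is_path E v n p).

Definition paths_spec (n : nat) (E : list edge) (Ps : list path) : Prop :=
  NoDup Ps /\ forall p, In p Ps <-> is_path E 0%nat n p.

(* flow-density function: C^1 on [0,oo) (one-sided at 0), strictly increasing,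
   strictly concave, mu(0)=0.  (mu'(0) < oo is automatic: dm 0 is a real.) *)
Definition strictly_increasing0 (m : R -> R) : Prop :=
  forall x y, 0 <= x -> x < y -> m x < m y.
Definition strictly_concave0 (m : R -> R) : Prop :=
  forall x y l, 0 <= x -> 0 <= y -> x <> y -> 0 < l < 1 ->
    l * m x + (1 - l) * m y < m (l * x + (1 - l) * y).
Definition C1_halfline (m : R -> R) : Prop :=
  exists dm : R -> R,
    (forall x, 0 <= x -> forall eps, 0 < eps -> exists del, 0 < del /\
       forall y, 0 <= y -> Rabs (y - x) < del ->
         Rabs (m y - m x - dm x * (y - x)) <= eps * Rabs (y - x)) /\
    (forall x, 0 <= x -> forall eps, 0 < eps -> exists del, 0 < del /\
       forall y, 0 <= y -> Rabs (y - x) < del -> Rabs (dm y - dm x) < eps).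
Definition flow_density (m : R -> R) : Prop :=
  m 0 = 0 /\ strictly_increasing0 m /\ strictly_concave0 m /\ C1_halfline m.

(* x < C := lim_{rho -> oo} m rho  (m increasing, so the limit is the sup) *)
Definition lt_cap (m : R -> R) (x : R) : Prop := exists r, 0 <= r /\ x < m r.

Definition Aop (Ps : list path) (x : path -> R) (e : edge) : R :=
  sumL Ps (fun p => if memb e p then x p else 0).

Definition InPi (E : list edge) (Ps : list path) (mu : edge -> R -> R)
    (x : path -> R) : Prop :=
  (forall p, In p Ps -> 0 <= x p) /\ sumL Ps x = 1 /\
  (forall e, In e E -> lt_cap (mu e) (Aop Ps x e)).

(* C* > 1, where C* is the min-cut capacity (capacities possibly +oo):
   for every cut U the (possibly infinite) sum of the limits exceeds 1 *)
Definition mincut_gt1 (n : nat) (E : list edge) (mu : edge -> R -> R) : Prop :=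
  forall U : nat -> bool, U 0%nat = true -> U n = false ->
    exists r, 0 <= r /\
      1 < sumL E (fun e => if U (fst e) && negb (U (snd e)) then mu e r else 0).

Definition dist {I : Type} (idx : list I) (x y : I -> R) : R :=
  sqrt (sumL idx (fun i => (x i - y i) ^ 2)).
Definition closed_in {I : Type} (idx : list I) (S : (I -> R) -> Prop) : Prop :=
  forall x, (forall eps, 0 < eps -> exists y, S y /\ dist idx x y < eps) -> S x.
Definition convex_in {I : Type} (S : (I -> R) -> Prop) : Prop :=
  forall x y l, S x -> S y -> 0 <= l <= 1 -> S (fun i => l * x i + (1 - l) * y i).
(* interior relative to the hyperplane {x : 1'x = 1} *)
Definition relint {I : Type} (idx : list I) (S : (I -> R) -> Prop) (x : I -> R) : Prop :=
  S x /\ exists eps, 0 < eps /\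
    forall y, sumL idx y = 1 -> dist idx x y < eps -> S y.
Definition rbdry {I : Type} (idx : list I) (S : (I -> R) -> Prop) (x : I -> R) : Prop :=
  S x /\ ~ relint idx S x.
Definition diff_on {I : Type} (idx : list I) (D : (I -> R) -> Prop)
    (F : (I -> R) -> R) (dF : (I -> R) -> I -> R) : Prop :=
  forall x, D x -> forall eps, 0 < eps -> exists del, 0 < del /\
    forall y, D y -> dist idx x y < del ->
      Rabs (F y - F x - sumL idx (fun i => dF x i * (y i - x i))) <= eps * dist idx x y.
Definition C1_on {I : Type} (idx : list I) (D : (I -> R) -> Prop)
    (F : (I -> R) -> R) : Prop :=
  exists dF, diff_on idx D F dF /\
    forall x, D x -> forall i, In i idx -> forall eps, 0 < eps -> exists del, 0 < del /\
      forall y, D y -> dist idx x y < del -> Rabs (dF y i - dF x i) < eps.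
Definition strictly_convex_on {I : Type} (idx : list I) (S : (I -> R) -> Prop)
    (h : (I -> R) -> R) : Prop :=
  forall x y l, S x -> S y -> (exists i, In i idx /\ x i <> y i) -> 0 < l < 1 ->
    h (fun i => l * x i + (1 - l) * y i) < l * h x + (1 - l) * h y.
(* || Phi v ||, Phi = I - |P|^{-1} 1 1' *)
Definition proj_norm {I : Type} (idx : list I) (v : I -> R) : R :=
  sqrt (sumL idx (fun i => (v i - sumL idx v / INR (length idx)) ^ 2)).

Definition admissible_perturbation (E : list edge) (Ps : list path)
    (mu : edge -> R -> R) (Pih : (path -> R) -> Prop) (h : (path -> R) -> R) : Prop :=
  (forall x, Pih x -> InPi E Ps mu x) /\
  closed_in Ps Pih /\ convex_in Pih /\ (exists x, relint Ps Pih x) /\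
  strictly_convex_on Ps Pih h /\
  exists g : (path -> R) -> path -> R,
    diff_on Ps (relint Ps Pih) h g /\
    (forall p, In p Ps -> exists dg, diff_on Ps (relint Ps Pih) (fun x => g x p) dg) /\
    (forall M, exists del, 0 < del /\
       forall x b, relint Ps Pih x -> rbdry Ps Pih b -> dist Ps x b < del ->
         M < proj_norm Ps (g x)).

Definition rderiv (g : R -> R) (x l : R) : Prop :=
  limit1_in (fun s => (g (x + s) - g x) / s) (fun s => 0 < s) l 0.

Definition is_delay (m : R -> R) (f tau : R) : Prop :=
  (0 < f /\ exists r, 0 <= r /\ m r = f /\ tau = r / f) \/
  (f = 0 /\ exists d, rderiv m 0 d /\ tau = / d).

Definition is_Fh (E : list edge) (Ps : list path) (mu : edge -> R -> R)
    (Pih : (path -> R) -> Prop) (h : (path -> R) -> R)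
    (f : edge -> R) (w : path -> R) : Prop :=
  Pih w /\ exists tau : edge -> R,
    (forall e, In e E -> is_delay (mu e) (f e) (tau e)) /\
    forall w', Pih w' ->
      sumL E (fun e => Aop Ps w e * tau e) + h w <=
      sumL E (fun e => Aop Ps w' e * tau e) + h w'.

(* local decisions: G v f pi e is G^v_e(f_{E_v^+}, pi); restr feeds only the
   coordinates of E_v^+ *)
Definition restr (E : list edge) (v : nat) (f : edge -> R) : edge -> R :=
  fun e => if existsb (edge_eqb e) (Eout E v) then f e else 0.
Definition Gr (G : nat -> (edge -> R) -> (path -> R) -> edge -> R)
    (E : list edge) (v : nat) (f : edge -> R) (pi : path -> R) (e : edge) : R :=
  G v (restr E v f) pi e.
Definition inFv (E : list edge) (mu : edge -> R -> R) (v : nat) (f : edge -> R) : Prop :=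
  forall e, In e (Eout E v) -> 0 <= f e /\ lt_cap (mu e) (f e).
Definition upd (f : edge -> R) (e : edge) (s : R) : edge -> R :=
  fun e' => if edge_eqb e' e then s else f e'.

Definition local_decisions (n : nat) (E : list edge) (Ps : list path)
    (mu : edge -> R -> R) (G : nat -> (edge -> R) -> (path -> R) -> edge -> R) : Prop :=
  forall v, (v < n)%nat ->
    (forall j, In j (Eout E v) ->
       C1_on (map inl (Eout E v) ++ map inr Ps)
         (fun z : edge + path -> R =>
            inFv E mu v (fun e => z (inl e)) /\ InPi E Ps mu (fun p => z (inr p)))
         (fun z => Gr G E v (fun e => z (inl e)) (fun p => z (inr p)) j)) /\
    (forall f pi, inFv E mu v f -> InPi E Ps mu pi ->
       (forall e, In e (Eout E v) -> 0 <= Gr G E v f pi e) /\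
       sumL (Eout E v) (Gr G E v f pi) = 1) /\
    (forall pi, InPi E Ps mu pi -> forall e, In e (Eout E v) ->
       sumL (Eout E v) (Aop Ps pi) * Gr G E v (Aop Ps pi) pi e = Aop Ps pi e) /\
    (forall pi f j e l, InPi E Ps mu pi -> inFv E mu v f ->
       In j (Eout E v) -> In e (Eout E v) -> j <> e ->
       rderiv (fun s => Gr G E v (upd f e s) pi j) (f e) l -> 0 <= l).

Definition Hval (E : list edge) (G : nat -> (edge -> R) -> (path -> R) -> edge -> R)
    (f : edge -> R) (pi : path -> R) (e : edge) : R :=
  (if Nat.eqb (fst e) 0 then 1 else sumL (Ein E (fst e)) f) * Gr G E (fst e) f pi e - f e.

Definition deriv0 (g : R -> R) (t l : R) : Prop :=
  forall eps, 0 < eps -> exists del, 0 < del /\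
    forall s, 0 <= s -> Rabs (s - t) < del ->
      Rabs (g s - g t - l * (s - t)) <= eps * Rabs (s - t).

Definition flow (mu : edge -> R -> R) (rho : R -> edge -> R) (t : R) : edge -> R :=
  fun e => mu e (rho t e).

Definition admissible_init (E : list edge) (Ps : list path) (mu : edge -> R -> R)
    (pi : R -> path -> R) (rho : R -> edge -> R) : Prop :=
  InPi E Ps mu (pi 0) /\ (forall p, In p Ps -> 0 < pi 0 p) /\
  (forall e, In e E -> 0 < rho 0 e).

Definition solution (E : list edge) (Ps : list path) (mu : edge -> R -> R)
    (G : nat -> (edge -> R) -> (path -> R) -> edge -> R)
    (Pih : (path -> R) -> Prop) (h : (path -> R) -> R) (eta : R)
    (pi : R -> path -> R) (rho : R -> edge -> R) : Prop :=
  (forall t, 0 <= t -> InPi E Ps mu (pi t) /\ forall e, In e E -> 0 <= rho t e) /\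
  (forall t, 0 <= t -> exists w, is_Fh E Ps mu Pih h (flow mu rho t) w /\
     forall p, In p Ps -> deriv0 (fun s => pi s p) t (eta * (w p - pi t p))) /\
  (forall t, 0 <= t -> forall e, In e E ->
     deriv0 (fun s => rho s e) t (Hval E G (flow mu rho t) (pi t) e)).

From Pilot Require Import Defs.
From Stdlib Require Import Reals List Lra Lia Rtopology Classical ClassicalEpsilon.
Open Scope R_scope.

(* The bound only concerns the route-choice part of the dynamics:
     d/dt pi = eta (F^h(f) - pi),   with F^h(f) in Pih.
   Since the load map w |-> (A w)_e is linear, each link load a(t) = (A pi(t))_e
   relaxes toward loads of points of Pih: a' = eta (q - a) with q <= m_e, where
   m_e is the maximal load of e over Pih.  As Pih is a compact subset of Pi,
   m_e is attained and hence m_e < C_e; we put Cbar_e strictly between them.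
   A comparison argument gives a(t) < m_e + (1 + |m_e|) e^{-eta t} + small, so
   a(t) <= Cbar_e after a time that depends on eta, m_e and Cbar_e only, not on
   the initial condition. *)

Lemma sumL_le {A : Type} (l : list A) (f g : A -> R) :
  (forall x, In x l -> f x <= g x) -> sumL l f <= sumL l g.
Proof.
  induction l as [|a l IH]; simpl; intros H; [lra|].
  apply Rplus_le_compat; [apply H | apply IH]; auto.
Qed.

Lemma sumL_ge0 {A : Type} (l : list A) (f : A -> R) :
  (forall x, In x l -> 0 <= f x) -> 0 <= sumL l f.
Proof.
  induction l as [|a l IH]; simpl; intros H; [lra|].
  assert (0 <= f a) by auto. assert (0 <= sumL l f) by auto. lra.
Qed.

Lemma sumL_term {A : Type} (l : list A) (f : A -> R) (x : A) :
  (forall y, In y l -> 0 <= f y) -> In x l -> f x <= sumL l f.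
Proof.
  induction l as [|a l IH]; simpl; intros H Hx; [destruct Hx|].
  destruct Hx as [->|Hx].
  - assert (0 <= sumL l f) by (apply sumL_ge0; auto). lra.
  - assert (0 <= f a) by auto. assert (f x <= sumL l f) by auto. lra.
Qed.

Lemma sumL_bound {A : Type} (l : list A) (f : A -> R) (d : R) :
  (forall x, In x l -> f x <= d) -> sumL l f <= INR (length l) * d.
Proof.
  induction l as [|a l IH]; cbn [sumL length]; intros H; [simpl; lra|].
  assert (f a <= d) by (apply H; left; auto).
  assert (sumL l f <= INR (length l) * d) by (apply IH; intros; apply H; right; auto).
  rewrite S_INR. lra.
Qed.

Lemma sumL_abs {A : Type} (l : list A) (f : A -> R) :
  Rabs (sumL l f) <= sumL l (fun x => Rabs (f x)).
Proof.
  induction l; simpl; [rewrite Rabs_R0; lra|].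
  eapply Rle_trans; [apply Rabs_triang | lra].
Qed.

Lemma sumL_minus {A : Type} (l : list A) (f g : A -> R) :
  sumL l f - sumL l g = sumL l (fun x => f x - g x).
Proof. induction l; simpl; [|rewrite <- IHl]; lra. Qed.

Lemma dist_small {I : Type} (idx : list I) (x y : I -> R) (eps : R) : 0 < eps ->
  (forall i, In i idx -> Rabs (x i - y i) < eps / (INR (length idx) + 1)) ->
  Defs.dist idx x y < eps.
Proof.
  intros He H. set (d := eps / (INR (length idx) + 1)) in *.
  assert (Hl : 0 <= INR (length idx)) by apply pos_INR.
  assert (Hd : 0 < d) by (unfold d; apply Rdiv_lt_0_compat; lra).
  assert (Hde : d * (INR (length idx) + 1) = eps) by (unfold d; field; lra).
  assert (Hs : sumL idx (fun i => (x i - y i) ^ 2) <= INR (length idx) * (d * d)).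
  { apply sumL_bound. intros i Hi. specialize (H i Hi).
    rewrite <- (pow2_abs (x i - y i)). pose proof (Rabs_pos (x i - y i)). nra. }
  unfold Defs.dist. rewrite <- (sqrt_pow2 eps) by lra.
  apply sqrt_lt_1_alt. split; [apply sumL_ge0; intros; apply pow2_ge_0 | nra].
Qed.

Definition extraction (phi : nat -> nat) : Prop := forall k, (phi k < phi (S k))%nat.

Lemma extraction_monotone (phi : nat -> nat) : extraction phi ->
  forall i j, (i <= j)%nat -> (phi i <= phi j)%nat.
Proof. intros H i j Hij. induction Hij; [lia|]. specialize (H m). lia. Qed.

Lemma extraction_ge_id (phi : nat -> nat) : extraction phi -> forall k, (k <= phi k)%nat.
Proof. intros H k. induction k; [lia|]. specialize (H k). lia. Qed.

Lemma extraction_comp (phi psi : nat -> nat) :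
  extraction phi -> extraction psi -> extraction (fun k => phi (psi k)).
Proof.
  intros Hphi Hpsi k. specialize (Hpsi k).
  pose proof (extraction_monotone phi Hphi (S (psi k)) (psi (S k)) Hpsi).
  specialize (Hphi (psi k)). lia.
Qed.

Lemma inv_succ_small (eps : R) : 0 < eps ->
  exists N, forall k, (N <= k)%nat -> / INR (S k) < eps.
Proof.
  intros He. destruct (archimed_cor1 eps He) as [N [HN HN0]].
  exists N. intros k Hk. apply Rle_lt_trans with (/ INR N); auto.
  apply Rinv_le_contravar; [apply lt_0_INR; lia | apply le_INR; lia].
Qed.

Fixpoint chain (c : nat -> nat -> nat) (k : nat) : nat :=
  match k with O => c O O | S k' => c (S (chain c k')) (S k') end.

(* Bolzano-Weierstrass with an explicit subsequence: Stdlib only provides a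
   cluster point, from which a subsequence converging to it is extracted. *)
Lemma real_subsequence (u : nat -> R) : (forall k, 0 <= u k <= 1) ->
  exists phi, extraction phi /\ exists l, Un_cv (fun k => u (phi k)) l.
Proof.
  intros Hb.
  destruct (Bolzano_Weierstrass u (fun c => 0 <= c <= 1) (compact_P3 0 1) Hb) as [l Hl].
  assert (Hnear : forall N k, exists p, (N <= p)%nat /\ Rabs (u p - l) < / INR (S k)).
  { intros N k.
    assert (Hp : 0 < / INR (S k)) by (apply Rinv_0_lt_compat, lt_0_INR; lia).
    destruct (Hl (disc l (mkposreal _ Hp)) N) as [p Hp']; [|exists p; exact Hp'].
    exists (mkposreal _ Hp). intros y Hy. exact Hy. }
  set (c := fun N k => proj1_sig (constructive_indefinite_description _ (Hnear N k))).
  assert (Hc : forall N k, (N <= c N k)%nat /\ Rabs (u (c N k) - l) < / INR (S k)).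
  { intros N k. unfold c. destruct (constructive_indefinite_description _ _); auto. }
  exists (chain c). split.
  - intros k. simpl. destruct (Hc (S (chain c k)) (S k)). lia.
  - exists l. intros eps He. destruct (inv_succ_small eps He) as [N HN].
    exists N. intros k Hk. unfold R_dist. specialize (HN k Hk).
    destruct k as [|k]; simpl;
      [destruct (Hc 0%nat 0%nat) | destruct (Hc (S (chain c k)) (S k))]; lra.
Qed.

Definition cv_along {I : Type} (idx : list I) (u : nat -> I -> R) (phi : nat -> nat)
    (lim : I -> R) : Prop :=
  forall eps, 0 < eps -> exists N, forall k, (N <= k)%nat ->
    forall i, In i idx -> Rabs (u (phi k) i - lim i) < eps.

Lemma cube_subsequence {I : Type} (eq_dec : forall i j : I, {i = j} + {i <> j})
    (idx : list I) (u : nat -> I -> R) :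
  (forall k i, In i idx -> 0 <= u k i <= 1) ->
  exists phi, extraction phi /\ exists lim, cv_along idx u phi lim.
Proof.
  induction idx as [|a idx IH]; intros Hb.
  - exists S. split; [intros k; lia|]. exists (fun _ => 0).
    intros eps _. exists O. intros k _ i [].
  - destruct IH as [phi1 [Hphi1 [lim1 Hlim1]]].
    { intros k i Hi. apply Hb. right; auto. }
    destruct (real_subsequence (fun k => u (phi1 k) a)) as [phi2 [Hphi2 [la Hla]]].
    { intros k. apply Hb. left; auto. }
    exists (fun k => phi1 (phi2 k)). split; [apply extraction_comp; auto|].
    exists (fun i => if eq_dec i a then la else lim1 i).
    intros eps He. destruct (Hlim1 eps He) as [N1 HN1]. destruct (Hla eps He) as [N2 HN2].
    exists (Nat.max N1 N2). intros k Hk i Hi.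
    destruct (eq_dec i a) as [->|Hne].
    + apply HN2. lia.
    + destruct Hi as [Hi|Hi]; [congruence|].
      apply HN1; auto. pose proof (extraction_ge_id phi2 Hphi2 k). lia.
Qed.

Definition l1_lipschitz {I : Type} (idx : list I) (L : (I -> R) -> R) : Prop :=
  forall x y, Rabs (L x - L y) <= sumL idx (fun i => Rabs (x i - y i)).

Lemma lub_approximants {X : Type} (D : X -> Prop) (L : X -> R) (s : R) :
  is_lub (fun y => exists x, D x /\ y = L x) s ->
  forall k, exists x, D x /\ s - / INR (S k) < L x.
Proof.
  intros [_ Hleast] k. apply NNPP. intros Hnone.
  assert (Hpos : 0 < / INR (S k)) by (apply Rinv_0_lt_compat, lt_0_INR; lia).
  assert (s <= s - / INR (S k)); [|lra].
  apply Hleast. intros y [x [Hx ->]]. apply Rnot_lt_le. intros Hlt.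
  apply Hnone. exists x; auto.
Qed.

Lemma cv_along_lipschitz {I : Type} (idx : list I) (L : (I -> R) -> R)
    (u : nat -> I -> R) (phi : nat -> nat) (lim : I -> R) :
  l1_lipschitz idx L -> cv_along idx u phi lim -> Un_cv (fun k => L (u (phi k))) (L lim).
Proof.
  intros HL Hcv eps He.
  assert (Hl : 0 <= INR (length idx)) by apply pos_INR.
  destruct (Hcv (eps / (INR (length idx) + 1))) as [N HN]; [apply Rdiv_lt_0_compat; lra|].
  exists N. intros k Hk. unfold R_dist. eapply Rle_lt_trans; [apply HL|].
  eapply Rle_lt_trans.
  - apply sumL_bound. intros i Hi. left. apply HN; eauto.
  - apply Rmult_lt_reg_r with (INR (length idx) + 1); [lra|].
    field_simplify; lra.
Qed.

Lemma cv_along_closed {I : Type} (idx : list I) (D : (I -> R) -> Prop)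
    (u : nat -> I -> R) (phi : nat -> nat) (lim : I -> R) :
  closed_in idx D -> (forall k, D (u k)) -> cv_along idx u phi lim -> D lim.
Proof.
  intros Hcl HD Hcv. apply Hcl. intros eps He.
  assert (Hl : 0 <= INR (length idx)) by apply pos_INR.
  destruct (Hcv (eps / (INR (length idx) + 1))) as [N HN]; [apply Rdiv_lt_0_compat; lra|].
  exists (u (phi N)). split; [apply HD|]. apply dist_small; auto.
  intros i Hi. rewrite Rabs_minus_sym. apply HN; auto.
Qed.

Theorem lipschitz_attains_max {I : Type} (eq_dec : forall i j : I, {i = j} + {i <> j})
    (idx : list I) (D : (I -> R) -> Prop) (L : (I -> R) -> R) :
  closed_in idx D -> (exists x, D x) ->
  (forall x, D x -> forall i, In i idx -> 0 <= x i <= 1) -> l1_lipschitz idx L ->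
  exists xs, D xs /\ forall x, D x -> L x <= L xs.
Proof.
  intros Hcl [x0 Hx0] Hcube HL.
  set (vals := fun y => exists x, D x /\ y = L x).
  assert (Hbound : bound vals).
  { exists (L x0 + INR (length idx)). intros y [x [Hx ->]].
    assert (Hd : sumL idx (fun i => Rabs (x i - x0 i)) <= INR (length idx) * 1).
    { apply sumL_bound. intros i Hi. apply Rabs_le.
      pose proof (Hcube x Hx i Hi). pose proof (Hcube x0 Hx0 i Hi). lra. }
    pose proof (Rle_abs (L x - L x0)). pose proof (HL x x0). lra. }
  destruct (completeness vals Hbound (ex_intro _ (L x0) (ex_intro _ x0 (conj Hx0 eq_refl))))
    as [s Hs].
  set (u := fun k => proj1_sig (constructive_indefinite_description _
                                  (lub_approximants D L s Hs k))).
  assert (Hu : forall k, D (u k) /\ s - / INR (S k) < L (u k)).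
  { intros k. unfold u. destruct (constructive_indefinite_description _ _); auto. }
  destruct (cube_subsequence eq_dec idx u) as [phi [Hphi [xs Hxs]]].
  { intros k i Hi. apply (Hcube (u k)); [apply Hu | auto]. }
  exists xs. split; [apply (cv_along_closed idx D u phi xs Hcl (fun k => proj1 (Hu k)) Hxs)|].
  assert (Hsup : s <= L xs).
  { apply Rnot_lt_le. intros Hlt. set (g := s - L xs).
    destruct (cv_along_lipschitz idx L u phi xs HL Hxs (g / 2)) as [N1 HN1]; [unfold g; lra|].
    destruct (inv_succ_small (g / 2)) as [N2 HN2]; [unfold g; lra|].
    set (k := Nat.max N1 N2).
    pose proof (proj2 (Hu (phi k))) as Hk.
    assert (/ INR (S (phi k)) < g / 2).
    { apply HN2. pose proof (extraction_ge_id phi Hphi k). unfold k in *. lia. }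
    specialize (HN1 k ltac:(unfold k; lia)). unfold R_dist in HN1.
    pose proof (Rle_abs (L (u (phi k)) - L xs)). unfold g in *. lra. }
  intros x Hx. apply Rle_trans with s; auto. apply Hs. exists x; auto.
Qed.

Definition continuous0 (g : R -> R) (t : R) : Prop :=
  forall eps, 0 < eps -> exists del, 0 < del /\
    forall s, 0 <= s -> Rabs (s - t) < del -> Rabs (g s - g t) < eps.

Lemma deriv0_continuous (g : R -> R) (t l : R) : deriv0 g t l -> continuous0 g t.
Proof.
  intros H eps He. destruct (H 1 Rlt_0_1) as [del [Hd Hdel]].
  assert (Hl : 0 <= Rabs l) by apply Rabs_pos.
  assert (Hq : 0 < eps / (Rabs l + 2)) by (apply Rdiv_lt_0_compat; lra).
  exists (Rmin del (eps / (Rabs l + 2))). split; [apply Rmin_pos; lra|].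
  intros s Hs Hst.
  assert (Hst1 : Rabs (s - t) < del) by (eapply Rlt_le_trans; [exact Hst|apply Rmin_l]).
  assert (Hst2 : Rabs (s - t) * (Rabs l + 2) < eps).
  { assert (Rabs (s - t) < eps / (Rabs l + 2))
      by (eapply Rlt_le_trans; [exact Hst | apply Rmin_r]).
    apply Rmult_lt_reg_r with (/ (Rabs l + 2)); [apply Rinv_0_lt_compat; lra|].
    rewrite Rmult_assoc, Rinv_r by lra. lra. }
  specialize (Hdel s Hs Hst1).
  replace (g s - g t) with ((g s - g t - l * (s - t)) + l * (s - t)) by ring.
  eapply Rle_lt_trans; [apply Rabs_triang|]. rewrite Rabs_mult.
  pose proof (Rabs_pos (s - t)). nra.
Qed.

Lemma deriv0_plus (f g : R -> R) (t a b : R) :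
  deriv0 f t a -> deriv0 g t b -> deriv0 (fun s => f s + g s) t (a + b).
Proof.
  intros Hf Hg eps He.
  destruct (Hf (eps / 2)) as [d1 [Hd1 H1]]; [lra|].
  destruct (Hg (eps / 2)) as [d2 [Hd2 H2]]; [lra|].
  exists (Rmin d1 d2). split; [apply Rmin_pos; lra|]. intros s Hs Hst.
  specialize (H1 s Hs (Rlt_le_trans _ _ _ Hst (Rmin_l d1 d2))).
  specialize (H2 s Hs (Rlt_le_trans _ _ _ Hst (Rmin_r d1 d2))).
  replace (f s + g s - (f t + g t) - (a + b) * (s - t)) with
    ((f s - f t - a * (s - t)) + (g s - g t - b * (s - t))) by ring.
  eapply Rle_trans; [apply Rabs_triang | lra].
Qed.

Lemma deriv0_scal (f : R -> R) (t a c : R) :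
  deriv0 f t a -> deriv0 (fun s => c * f s) t (c * a).
Proof.
  intros Hf eps He. assert (Hc : 0 <= Rabs c) by apply Rabs_pos.
  destruct (Hf (eps / (Rabs c + 1))) as [d [Hd H]]; [apply Rdiv_lt_0_compat; lra|].
  exists d. split; auto. intros s Hs Hst. specialize (H s Hs Hst).
  replace (c * f s - c * f t - c * a * (s - t)) with (c * (f s - f t - a * (s - t))) by ring.
  rewrite Rabs_mult.
  assert (Hr : Rabs c * (eps / (Rabs c + 1)) <= eps).
  { apply Rmult_le_reg_r with (Rabs c + 1); [lra|]. field_simplify; lra. }
  pose proof (Rabs_pos (s - t)).
  apply Rle_trans with (Rabs c * (eps / (Rabs c + 1) * Rabs (s - t))); [|nra].
  apply Rmult_le_compat_l; auto.
Qed.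

Lemma deriv0_const (t c : R) : deriv0 (fun _ => c) t 0.
Proof.
  intros eps He. exists 1. split; [lra|]. intros s _ _.
  replace (c - c - 0 * (s - t)) with 0 by ring. rewrite Rabs_R0.
  pose proof (Rabs_pos (s - t)). nra.
Qed.

Lemma deriv0_sumL {A : Type} (l : list A) (F : R -> A -> R) (d : A -> R) (t : R) :
  (forall p, In p l -> deriv0 (fun s => F s p) t (d p)) ->
  deriv0 (fun s => sumL l (F s)) t (sumL l d).
Proof.
  induction l as [|a l IH]; simpl; intros H; [apply deriv0_const|].
  apply (deriv0_plus (fun s => F s a) (fun s => sumL l (F s))); auto.
Qed.

Lemma deriv0_of_lim (f : R -> R) (t l : R) : derivable_pt_lim f t l -> deriv0 f t l.
Proof.
  intros H eps He. destruct (H eps He) as [del Hdel]. exists del. split; [apply cond_pos|].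
  intros s _ Hst. destruct (Req_dec s t) as [->|Hne].
  - replace (f t - f t - l * (t - t)) with 0 by ring.
    rewrite Rabs_R0, Rminus_diag, Rabs_R0. lra.
  - specialize (Hdel (s - t) ltac:(lra) Hst).
    replace (t + (s - t)) with s in Hdel by ring.
    replace (f s - f t - l * (s - t)) with (((f s - f t) / (s - t) - l) * (s - t))
      by (field; lra).
    rewrite Rabs_mult. pose proof (Rabs_pos (s - t)). nra.
Qed.

Lemma deriv0_exp_decay (eta t : R) :
  deriv0 (fun s => exp (- eta * s)) t (- eta * exp (- eta * t)).
Proof.
  apply deriv0_of_lim.
  replace (- eta * exp (- eta * t)) with (exp (- eta * t) * (- eta * 1)) by ring.
  apply (derivable_pt_lim_comp (fun s => - eta * s) exp).
  - apply (derivable_pt_lim_scal id), derivable_pt_lim_id.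
  - apply derivable_pt_lim_exp.
Qed.

Lemma first_zero (c : R -> R) (T : R) :
  (forall t, 0 <= t -> continuous0 c t) -> c 0 < 0 -> 0 <= T -> 0 <= c T ->
  exists ts, 0 < ts <= T /\ c ts = 0 /\ forall s, 0 <= s < ts -> c s < 0.
Proof.
  intros Hcont H0 HT HcT.
  set (neg := fun x => 0 <= x <= T /\ forall s, 0 <= s <= x -> c s < 0).
  assert (Hneg0 : neg 0).
  { split; [lra|]. intros s Hs. replace s with 0 by lra. auto. }
  destruct (completeness neg) as [ts [Hub Hlub]].
  { exists T. intros x [[_ Hx] _]. auto. }
  { exists 0. exact Hneg0. }
  assert (Hts0 : 0 <= ts) by (apply Hub; auto).
  assert (HtsT : ts <= T) by (apply Hlub; intros x [[_ Hx] _]; auto).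
  assert (Hbefore : forall s, 0 <= s < ts -> c s < 0).
  { intros s Hs. apply Rnot_le_lt. intros Hcs.
    assert (ts <= s); [|lra].
    apply Hlub. intros x [_ Hx]. apply Rnot_lt_le. intros Hlt.
    specialize (Hx s). lra. }
  (* c keeps the sign of c ts on a neighbourhood of ts *)
  destruct (Rtotal_order (c ts) 0) as [Hn|[Hz|Hp]].
  - destruct (Hcont ts Hts0 (- c ts)) as [del [Hdel Hc]]; [lra|].
    destruct (Req_dec ts T) as [->|HneT]; [lra|].
    set (x := Rmin T (ts + del / 2)).
    assert (Hx1 : ts < x) by (unfold x; apply Rmin_glb_lt; lra).
    assert (Hx2 : x <= ts + del / 2) by apply Rmin_r.
    assert (neg x); [|specialize (Hub x H); lra].
    split; [split; [lra | apply Rmin_l]|]. intros s Hs.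
    destruct (Rlt_le_dec s ts); [apply Hbefore; lra|].
    assert (Rabs (s - ts) < del) by (rewrite Rabs_right; lra).
    specialize (Hc s (proj1 Hs) H). pose proof (Rle_abs (c s - c ts)). lra.
  - exists ts. repeat split; auto.
    destruct Hts0 as [|<-]; [auto | lra].
  - assert (Htp : 0 < ts) by (destruct Hts0 as [|<-]; [auto | lra]).
    destruct (Hcont ts Hts0 (c ts)) as [del [Hdel Hc]]; [lra|].
    set (s := Rmax 0 (ts - del / 2)).
    assert (Hs1 : 0 <= s) by apply Rmax_l.
    assert (Hs2 : s < ts) by (unfold s; apply Rmax_lub_lt; lra).
    assert (Hs3 : ts - del / 2 <= s) by apply Rmax_r.
    assert (Habs : Rabs (s - ts) < del) by (rewrite Rabs_left; lra).
    specialize (Hc s Hs1 Habs). pose proof (Rle_abs (- (c s - c ts))).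
    rewrite Rabs_Ropp in H. specialize (Hbefore s (conj Hs1 Hs2)). lra.
Qed.

Lemma barrier (c : R -> R) : c 0 < 0 ->
  (forall t, 0 <= t -> exists l, deriv0 c t l /\ (c t = 0 -> l < 0)) ->
  forall t, 0 <= t -> c t < 0.
Proof.
  intros H0 Hd T HT. apply Rnot_le_lt. intros HcT.
  destruct (first_zero c T) as [ts [[Htp HtsT] [Hz Hbefore]]]; auto.
  { intros t Ht. destruct (Hd t Ht) as [l [Hl _]]. exact (deriv0_continuous c t l Hl). }
  destruct (Hd ts ltac:(lra)) as [l [Hl Hl0]]. specialize (Hl0 Hz).
  (* just before ts, c s is about l (s - ts) > 0 *)
  destruct (Hl (- l / 2)) as [del [Hdel H]]; [lra|].
  set (s := Rmax 0 (ts - del / 2)).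
  assert (Hs1 : 0 <= s) by apply Rmax_l.
  assert (Hs2 : s < ts) by (unfold s; apply Rmax_lub_lt; lra).
  assert (Hs3 : ts - del / 2 <= s) by apply Rmax_r.
  assert (Habs : Rabs (s - ts) = ts - s) by (rewrite Rabs_left; lra).
  specialize (H s Hs1). rewrite Habs, Hz in H. specialize (H ltac:(lra)).
  pose proof (Rle_abs (- (c s - 0 - l * (s - ts)))) as Hab. rewrite Rabs_Ropp in Hab.
  specialize (Hbefore s (conj Hs1 Hs2)).
  assert (0 < - l / 2 * (ts - s)) by (apply Rmult_lt_0_compat; lra).
  nra.
Qed.

(* K e^{-eta t} <= dlt/2 once t >= 2K/(dlt eta), using e^x > x. *)
Lemma exp_tail_bound (K dlt eta t : R) : 0 < K -> 0 < dlt -> 0 < eta ->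
  2 * K / (dlt * eta) <= t -> K * exp (- eta * t) <= dlt / 2.
Proof.
  intros HK Hd He Ht.
  assert (Hq : 0 < 2 * K / (dlt * eta)) by (apply Rdiv_lt_0_compat; nra).
  assert (Het : 2 * K <= dlt * (eta * t)).
  { replace (2 * K) with (dlt * eta * (2 * K / (dlt * eta))) by (field; lra).
    rewrite <- Rmult_assoc. apply Rmult_le_compat_l; nra. }
  assert (Hx : eta * t < exp (eta * t)).
  { pose proof (exp_ineq1 (eta * t)) as H1. assert (eta * t <> 0) by nra.
    specialize (H1 H). lra. }
  replace (- eta * t) with (- (eta * t)) by ring. rewrite exp_Ropp.
  assert (Hpos : 0 < exp (eta * t)) by apply exp_pos.
  apply Rmult_le_reg_r with (exp (eta * t)); auto.
  rewrite Rmult_assoc, Rinv_l by lra. nra.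
Qed.

(* Relaxation toward targets bounded by m: if a' = eta (q - a) with q <= m and
   a(0) <= 1, then a stays below m + (1 + |m|) e^{-eta t} + dlt.  At a point
   where a touches this envelope, the envelope's derivative exceeds that of a. *)
Lemma relaxation_envelope (a : R -> R) (eta m dlt : R) : 0 < eta -> 0 < dlt -> a 0 <= 1 ->
  (forall t, 0 <= t -> exists q, q <= m /\ deriv0 a t (eta * (q - a t))) ->
  forall t, 0 <= t -> a t < m + (1 + Rabs m) * exp (- eta * t) + dlt.
Proof.
  intros He Hd Ha0 Hder.
  set (K := 1 + Rabs m).
  set (c := fun t => a t + (- K) * exp (- eta * t) + - (m + dlt)).
  assert (Hc : forall t, 0 <= t -> c t < 0).
  { apply barrier.
    - unfold c, K. replace (- eta * 0) with 0 by ring. rewrite exp_0.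
      pose proof (Rle_abs (- m)). rewrite Rabs_Ropp in H. lra.
    - intros t Ht. destruct (Hder t Ht) as [q [Hq Hdq]].
      exists (eta * (q - a t) + (- K) * (- eta * exp (- eta * t)) + 0). split.
      + apply deriv0_plus; [apply deriv0_plus|]; auto.
        * apply (deriv0_scal (fun s => exp (- eta * s))), deriv0_exp_decay.
        * apply deriv0_const.
      + unfold c. intros Hz. nra. }
  intros t Ht. specialize (Hc t Ht). unfold c in Hc. lra.
Qed.

Lemma relaxation_eventually (eta m dlt : R) : 0 < eta -> 0 < dlt ->
  exists t1, 0 <= t1 /\ forall a : R -> R, a 0 <= 1 ->
    (forall t, 0 <= t -> exists q, q <= m /\ deriv0 a t (eta * (q - a t))) ->
    forall t, t1 <= t -> a t <= m + dlt.
Proof.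
  intros He Hd. set (K := 1 + Rabs m).
  assert (HK : 0 < K) by (unfold K; pose proof (Rabs_pos m); lra).
  exists (2 * K / (dlt * eta)).
  assert (Ht1 : 0 <= 2 * K / (dlt * eta)) by (left; apply Rdiv_lt_0_compat; nra).
  split; auto. intros a Ha0 Hder t Ht.
  pose proof (relaxation_envelope a eta m (dlt / 2) He ltac:(lra) Ha0 Hder t ltac:(lra)).
  pose proof (exp_tail_bound K dlt eta t HK Hd He Ht). fold K in H. lra.
Qed.

Lemma finite_choice {A : Type} (eq_dec : forall a b : A, {a = b} + {a <> b})
    (l : list A) (P : A -> R -> Prop) :
  (forall a, In a l -> exists x, P a x) -> exists f, forall a, In a l -> P a (f a).
Proof.
  induction l as [|a l IH]; intros H.
  - exists (fun _ => 0). intros a [].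
  - destruct (H a (or_introl eq_refl)) as [xa Hxa].
    destruct IH as [f Hf]; [intros b Hb; apply H; right; auto|].
    exists (fun b => if eq_dec b a then xa else f b). intros b [<-|Hb].
    + destruct (eq_dec a a); [auto | congruence].
    + destruct (eq_dec b a) as [->|]; auto.
Qed.

Lemma finite_uniform_time {A : Type} (l : list A) (P : A -> R -> Prop) :
  (forall a t t', P a t -> t <= t' -> P a t') ->
  (forall a, In a l -> exists t, 0 <= t /\ P a t) ->
  exists t0, 0 <= t0 /\ forall a, In a l -> P a t0.
Proof.
  intros Hmono. induction l as [|a l IH]; intros H.
  - exists 0. split; [lra | intros a []].
  - destruct (H a (or_introl eq_refl)) as [ta [Hta Hpa]].
    destruct IH as [t [Ht Hpt]]; [intros b Hb; apply H; right; auto|].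
    exists (Rmax ta t). split; [apply Rmax_Rle; auto|].
    intros b [<-|Hb]; eapply Hmono; eauto; [apply Rmax_l | apply Rmax_r].
Qed.

Definition edge_eq_dec : forall e e' : edge, {e = e'} + {e <> e'}.
Proof. repeat decide equality. Defined.

Definition path_eq_dec : forall p q : path, {p = q} + {p <> q}.
Proof. repeat decide equality. Defined.

Lemma Aop_le_mass (Ps : list path) (w : path -> R) (e : edge) :
  (forall p, In p Ps -> 0 <= w p) -> Aop Ps w e <= sumL Ps w.
Proof. intros H. apply sumL_le. intros p Hp. destruct (memb e p); auto. lra. Qed.

Lemma Aop_lipschitz (Ps : list path) (e : edge) : l1_lipschitz Ps (fun w => Aop Ps w e).
Proof.
  intros x y. unfold Aop. rewrite sumL_minus.
  eapply Rle_trans; [apply sumL_abs|]. apply sumL_le. intros p _.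
  destruct (memb e p); [lra|]. rewrite Rminus_diag, Rabs_R0. apply Rabs_pos.
Qed.

(* Since Pih is compact and lies in Pi, the load of a link over Pih is
   maximized at some m strictly below capacity; the midpoint Cb between m and
   a flow value above m still lies below capacity. *)
Lemma load_margin (E : list edge) (Ps : list path) (mu : edge -> R -> R)
    (Pih : (path -> R) -> Prop) (e : edge) :
  (forall x, Pih x -> InPi E Ps mu x) -> closed_in Ps Pih -> (exists x, Pih x) -> In e E ->
  exists Cb, lt_cap (mu e) Cb /\ exists m, m < Cb /\ forall w, Pih w -> Aop Ps w e <= m.
Proof.
  intros Hsub Hcl Hne He.
  destruct (lipschitz_attains_max path_eq_dec Ps Pih (fun w => Aop Ps w e))
    as [ws [Hws Hmax]]; auto.
  - intros w Hw p Hp. destruct (Hsub w Hw) as [Hnn [Hmass _]].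
    split; auto. rewrite <- Hmass. apply sumL_term; auto.
  - apply Aop_lipschitz.
  - destruct (Hsub ws Hws) as [_ [_ Hcap]]. destruct (Hcap e He) as [r [Hr Hlt]].
    exists ((Aop Ps ws e + mu e r) / 2). split.
    + exists r. split; [auto | lra].
    + exists (Aop Ps ws e). split; [lra | auto].
Qed.

Lemma Aop_relaxation_rate (Ps : list path) (e : edge) (eta : R) (w x : path -> R) :
  sumL Ps (fun p => if memb e p then eta * (w p - x p) else 0) =
  eta * (Aop Ps w e - Aop Ps x e).
Proof. unfold Aop. induction Ps as [|q Ps IH]; simpl; [|rewrite IH; destruct (memb e q)]; ring. Qed.

Lemma load_dynamics (E : list edge) (Ps : list path) (mu : edge -> R -> R)
    (G : nat -> (edge -> R) -> (path -> R) -> edge -> R)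
    (Pih : (path -> R) -> Prop) (h : (path -> R) -> R) (eta : R)
    (pi : R -> path -> R) (rho : R -> edge -> R) (e : edge) :
  solution E Ps mu G Pih h eta pi rho -> forall t, 0 <= t ->
  exists w, Pih w /\
    deriv0 (fun s => Aop Ps (pi s) e) t (eta * (Aop Ps w e - Aop Ps (pi t) e)).
Proof.
  intros [_ [Hpi _]] t Ht. destruct (Hpi t Ht) as [w [[Hw _] Hd]].
  exists w. split; auto.
  replace (eta * (Aop Ps w e - Aop Ps (pi t) e))
    with (sumL Ps (fun p => if memb e p then eta * (w p - pi t p) else 0)).
  - apply (deriv0_sumL Ps (fun s p => if memb e p then pi s p else 0)).
    intros p Hp. destruct (memb e p); [apply Hd; auto | apply deriv0_const].
  - apply Aop_relaxation_rate.
Qed.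

(* Cbar_e is chosen by load_margin; for a given eta, t0 is the latest of the
   per-link relaxation times from relaxation_eventually. *)
Theorem lemma4 (n : nat) (E : list edge) (Ps : list path) (mu : edge -> R -> R)
    (Pih : (path -> R) -> Prop) (h : (path -> R) -> R) :
  network n E -> paths_spec n E Ps ->
  (forall e, In e E -> flow_density (mu e)) -> mincut_gt1 n E mu ->
  admissible_perturbation E Ps mu Pih h ->
  exists Cbar : edge -> R, (forall e, In e E -> lt_cap (mu e) (Cbar e)) /\
  forall G : nat -> (edge -> R) -> (path -> R) -> edge -> R,
    local_decisions n E Ps mu G ->
    forall eta, 0 < eta -> exists t0, 0 <= t0 /\
      forall (pi : R -> path -> R) (rho : R -> edge -> R),
        admissible_init E Ps mu pi rho -> solution E Ps mu G Pih h eta pi rho ->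
        forall t, t0 <= t -> forall e, In e E -> Aop Ps (pi t) e <= Cbar e.
Proof.
  intros _ _ _ _ [Hsub [Hcl [_ [[x0 [Hx0 _]] _]]]].
  destruct (finite_choice edge_eq_dec E (fun e Cb => lt_cap (mu e) Cb /\
              exists m, m < Cb /\ forall w, Pih w -> Aop Ps w e <= m)) as [Cbar HCbar].
  { intros e He. apply (load_margin E); eauto. }
  exists Cbar. split; [intros e He; apply HCbar; auto|].
  intros G _ eta Heta.
  destruct (finite_uniform_time E (fun e t0 =>
              forall pi rho, admissible_init E Ps mu pi rho ->
                solution E Ps mu G Pih h eta pi rho ->
                forall t, t0 <= t -> Aop Ps (pi t) e <= Cbar e)) as [t0 [Ht0 Hall]].
  - intros e t t' H Htt' pi rho Hinit Hsol s Hs. apply (H pi rho); auto; lra.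
  - intros e He. destruct (HCbar e He) as [_ [m [Hm Hload]]].
    destruct (relaxation_eventually eta m (Cbar e - m)) as [t1 [Ht1 Hrel]]; [auto | lra|].
    exists t1. split; auto. intros pi rho Hinit Hsol t Ht.
    replace (Cbar e) with (m + (Cbar e - m)) by ring.
    apply (Hrel (fun s => Aop Ps (pi s) e)); auto.
    + destruct Hinit as [[Hnn [Hmass _]] _]. rewrite <- Hmass. apply Aop_le_mass; auto.
    + intros s Hs. destruct (load_dynamics E Ps mu G Pih h eta pi rho e Hsol s Hs)
        as [w [Hw Hd]].
      exists (Aop Ps w e). auto.
  - exists t0. split; auto. intros pi rho Hinit Hsol t Ht e He. eapply Hall; eauto.
Qed.
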